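(* Let $q\in(0,1)$. Every fixed point $p\in\mathcal M_1^+$ of $\mathcal R_q$ other than $(1,0,0,\dots)$ satisfies $p_k>0$ for all $k\ge0$. None of these fixed points is reversible, i.e. for none of them does $T^{(q)}_{ij,k\ell}p_kp_\ell=T^{(q)}_{k\ell,ij}p_ip_j$ hold for all $i,j,k,\ell\ge0$.
   Context: $\mathcal M_1^+$ is the set of probability measures on $\mathbb N_0$, identified with nonnegative sequences summing to $1$. For $q\in[0,1]$, $$T^{(q)}_{ij,k\ell}=C^{(q)}_{k\ell}\,\delta_{i+j,k+\ell}\,(1+\min\{k,\ell,i,j\})\,q^{\max\{0,\ \min\{k,\ell\}-\min\{i,j\}\}},$$ with $0^0=1$ and $C^{(q)}_{k\ell}>0$ chosen so that $\sum_{i,j\ge0}T^{(q)}_{ij,k\ell}=1$. The recombinator on $\mathcal M_1^+$ is $\mathcal R_q(p)_i=\sum_{j,k,\ell\ge0}T^{(q)}_{ij,k\ell}p_kp_\ell$. *)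

From Stdlib Require Import Reals Arith.
From Coquelicot Require Import Coquelicot.
Open Scope R_scope.

Definition prob_measure (p : nat -> R) : Prop :=
  (forall k, 0 <= p k) /\ is_series p 1.

(* Unnormalized kernel:
   delta_{i+j,k+l} (1 + min{k,l,i,j}) q^{max(0, min{k,l} - min{i,j})}.
   Truncated nat subtraction gives max(0, .), and pow gives 0^0 = 1. *)
Definition T_un (q : R) (i j k l : nat) : R :=
  if Nat.eqb (i + j) (k + l)
  then INR (1 + Nat.min (Nat.min k l) (Nat.min i j))
       * q ^ (Nat.min k l - Nat.min i j)
  else 0.

Definition C_q (q : R) (k l : nat) : R :=
  / Series (fun i => Series (fun j => T_un q i j k l)).

Definition T_q (q : R) (i j k l : nat) : R := C_q q k l * T_un q i j k l.

Definition recomb (q : R) (p : nat -> R) (i : nat) : R :=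
  Series (fun j => Series (fun k => Series (fun l => T_q q i j k l * p k * p l))).

Definition dirac0 (k : nat) : R := if Nat.eqb k 0 then 1 else 0.

Definition reversible (q : R) (p : nat -> R) : Prop :=
  forall i j k l : nat, T_q q i j k l * p k * p l = T_q q k l i j * p i * p j.

(* A fixed point dominates every single term of its own recombinator sum:
   p_i >= T_{ij,kl} p_k p_l, and T_{ij,kl} > 0 whenever i + j = k + l.  Hence
   p_k, p_l > 0 forces p_i > 0 for every i <= k + l; starting from some
   p_m > 0 with m >= 1 (which exists as p is not the Dirac mass at 0) the
   support grows without bound and fills N_0.  For irreversibility,
   detailed balance on the cycle of pairs (0,2), (1,1), (0,3), (1,2), (2,2),
   (1,3) yields, after eliminating p_0 p_3 and p_0 p_2, the polynomial
   identity 4 (1 - q) (6 + 2q - q^2) p_1^2 = 0, impossible for 0 < q < 1. *)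
From Stdlib Require Import Reals Lra Lia Psatz Classical FunctionalExtensionality.
From Coquelicot Require Import Coquelicot.
Open Scope R_scope.

Lemma sum_f_R0_stable (a : nat -> R) (N n : nat) :
  (forall m, (N < m)%nat -> a m = 0) -> (N <= n)%nat ->
  sum_f_R0 a n = sum_f_R0 a N.
Proof.
  intros Ha Hn.
  destruct (Nat.eq_dec N n) as [<-|Hne]; [reflexivity|].
  rewrite (tech2 a N n) by lia.
  rewrite (sum_eq_R0 (fun m => a (S N + m)%nat)); [ring|].
  intros m _; apply Ha; lia.
Qed.

Lemma sum_f_R0_singleton (a : nat -> R) (m N : nat) :
  (forall n, n <> m -> a n = 0) -> (m <= N)%nat -> sum_f_R0 a N = a m.
Proof.
  intros Ha Hm.
  rewrite (sum_f_R0_stable a m N); [| intros n Hn; apply Ha; lia | exact Hm].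
  destruct m as [|m]; [reflexivity|].
  rewrite tech5, sum_eq_R0; [ring|].
  intros n Hn; apply Ha; lia.
Qed.

Lemma sum_f_R0_ge_term (a : nat -> R) (k N : nat) :
  (forall n, 0 <= a n) -> (k <= N)%nat -> a k <= sum_f_R0 a N.
Proof.
  intros Ha Hk.
  set (ak := fun n => if Nat.eqb n k then a n else 0).
  replace (a k) with (ak k) by (unfold ak; rewrite Nat.eqb_refl; reflexivity).
  rewrite <- (sum_f_R0_singleton ak k N); [| |exact Hk].
  2: intros n Hn; unfold ak; rewrite (proj2 (Nat.eqb_neq n k) Hn); reflexivity.
  apply sum_Rle; intros n _; unfold ak.
  destruct (Nat.eqb n k); [lra | apply Ha].
Qed.

Lemma Series_finite_support (a : nat -> R) (N : nat) :
  (forall n, (N < n)%nat -> a n = 0) -> Series a = sum_f_R0 a N.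
Proof.
  intros Ha; apply is_series_unique, is_series_Reals.
  intros eps Heps; exists N; intros n Hn.
  rewrite (sum_f_R0_stable a N n Ha Hn).
  unfold Rdist; rewrite Rminus_diag, Rabs_R0; exact Heps.
Qed.

Lemma Series_singleton (a : nat -> R) (m : nat) :
  (forall n, n <> m -> a n = 0) -> Series a = a m.
Proof.
  intros Ha.
  rewrite (Series_finite_support a m) by (intros; apply Ha; lia).
  apply sum_f_R0_singleton; [exact Ha | lia].
Qed.

Lemma Series_ge_term (a : nat -> R) (k : nat) :
  (forall n, 0 <= a n) -> ex_series a -> a k <= Series a.
Proof.
  intros Ha Hex.
  set (ak := fun n => if Nat.eqb n k then a n else 0).
  replace (a k) with (Series ak).
  - apply Series_le; [|exact Hex].
    intros n; unfold ak; destruct (Nat.eqb n k); split; (lra || apply Ha).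
  - rewrite (Series_singleton ak k)
      by (intros n Hn; unfold ak; rewrite (proj2 (Nat.eqb_neq n k) Hn); reflexivity).
    unfold ak; rewrite Nat.eqb_refl; reflexivity.
Qed.

Section Kernel.

Variable q : R.
Hypothesis q_gt0 : 0 < q.

Lemma T_un_nonneg (i j k l : nat) : 0 <= T_un q i j k l.
Proof.
  unfold T_un; destruct (Nat.eqb _ _); [|lra].
  apply Rmult_le_pos; [apply pos_INR | apply pow_le; lra].
Qed.

Lemma T_un_pos (i j k l : nat) : (i + j = k + l)%nat -> 0 < T_un q i j k l.
Proof.
  intros E; unfold T_un; rewrite (proj2 (Nat.eqb_eq _ _) E).
  apply Rmult_lt_0_compat; [apply lt_0_INR; lia | apply pow_lt; lra].
Qed.

Lemma T_un_eq0 (i j k l : nat) : (i + j <> k + l)%nat -> T_un q i j k l = 0.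
Proof. intros E; unfold T_un; rewrite (proj2 (Nat.eqb_neq _ _) E); reflexivity. Qed.

Definition T_mass (k l : nat) : R :=
  sum_f_R0 (fun i => T_un q i (k + l - i) k l) (k + l).

Lemma C_q_inv_mass (k l : nat) : C_q q k l = / T_mass k l.
Proof.
  unfold C_q, T_mass; f_equal.
  rewrite (Series_ext _ (fun i => T_un q i (k + l - i) k l)).
  - apply Series_finite_support; intros i Hi; apply T_un_eq0; lia.
  - intros i; apply (Series_singleton (fun j => T_un q i j k l)).
    intros j Hj; apply T_un_eq0; lia.
Qed.

Lemma T_un_le_mass (i j k l : nat) : (i + j = k + l)%nat -> T_un q i j k l <= T_mass k l.
Proof.
  intros E; unfold T_mass; replace j with (k + l - i)%nat by lia.
  apply (sum_f_R0_ge_term (fun i => T_un q i (k + l - i) k l)); [intros; apply T_un_nonneg | lia].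
Qed.

Lemma T_mass_pos (k l : nat) : 0 < T_mass k l.
Proof.
  apply Rlt_le_trans with (T_un q 0 (k + l) k l); [apply T_un_pos; lia|].
  apply T_un_le_mass; lia.
Qed.

Lemma T_q_nonneg (i j k l : nat) : 0 <= T_q q i j k l.
Proof.
  unfold T_q; rewrite C_q_inv_mass.
  apply Rmult_le_pos; [left; apply Rinv_0_lt_compat, T_mass_pos | apply T_un_nonneg].
Qed.

Lemma T_q_pos (i j k l : nat) : (i + j = k + l)%nat -> 0 < T_q q i j k l.
Proof.
  intros E; unfold T_q; rewrite C_q_inv_mass.
  apply Rmult_lt_0_compat; [apply Rinv_0_lt_compat, T_mass_pos | apply T_un_pos, E].
Qed.

Lemma T_q_eq0 (i j k l : nat) : (i + j <> k + l)%nat -> T_q q i j k l = 0.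
Proof. intros E; unfold T_q; rewrite T_un_eq0 by exact E; ring. Qed.

Lemma T_q_le1 (i j k l : nat) : T_q q i j k l <= 1.
Proof.
  destruct (Nat.eq_dec (i + j) (k + l)) as [E|E]; [|rewrite T_q_eq0 by exact E; lra].
  unfold T_q; rewrite C_q_inv_mass.
  pose proof (T_mass_pos k l) as Hm.
  rewrite <- (Rinv_l (T_mass k l)) by lra.
  apply Rmult_le_compat_l; [left; apply Rinv_0_lt_compat, Hm | apply T_un_le_mass, E].
Qed.

End Kernel.

Lemma prob_measure_ne_dirac0 (p : nat -> R) :
  prob_measure p -> p <> dirac0 -> exists m, (1 <= m)%nat /\ 0 < p m.
Proof.
  intros [Hp Hsum] Hne; apply NNPP; intros Hnone.
  assert (Hzero : forall m, (0 < m)%nat -> p m = 0).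
  { intros m Hm; destruct (Hp m) as [Hpos|]; [|congruence].
    exfalso; apply Hnone; exists m; split; [lia | exact Hpos]. }
  apply Hne, functional_extensionality; intros [|m]; cbn; [|apply Hzero; lia].
  rewrite <- (is_series_unique _ _ Hsum).
  symmetry; apply Series_singleton; intros n Hn; apply Hzero; lia.
Qed.

Section FixedPoint.

Variables (q : R) (p : nat -> R).
Hypothesis q_gt0 : 0 < q.
Hypothesis p_prob : prob_measure p.
Hypothesis p_fixed : forall i, recomb q p i = p i.

Let p_nonneg : forall k, 0 <= p k := proj1 p_prob.

Definition recomb_row (i j : nat) : R :=
  sum_f_R0 (fun k => T_q q i j k (i + j - k) * p k * p (i + j - k)%nat) (i + j).

Lemma recomb_rows (i : nat) : recomb q p i = Series (recomb_row i).
Proof.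
  unfold recomb; apply Series_ext; intros j.
  rewrite (Series_ext _ (fun k => T_q q i j k (i + j - k) * p k * p (i + j - k)%nat)).
  - apply Series_finite_support; intros k Hk; rewrite T_q_eq0 by lia; ring.
  - intros k; apply (Series_singleton (fun l => T_q q i j k l * p k * p l)).
    intros l Hl; rewrite T_q_eq0 by lia; ring.
Qed.

Lemma recomb_term_nonneg (i j k l : nat) : 0 <= T_q q i j k l * p k * p l.
Proof.
  apply Rmult_le_pos; [apply Rmult_le_pos|]; [apply T_q_nonneg | |]; auto.
Qed.

Lemma recomb_row_le_cauchy (i j : nat) :
  recomb_row i j <= sum_f_R0 (fun k => p k * p (i + j - k)%nat) (i + j).
Proof.
  apply sum_growing; intros k.
  pose proof (T_q_le1 q q_gt0 i j k (i + j - k)).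
  pose proof (Rmult_le_pos _ _ (p_nonneg k) (p_nonneg (i + j - k))).
  rewrite Rmult_assoc; rewrite <- (Rmult_1_l (p k * _)) at 2.
  apply Rmult_le_compat_r; assumption.
Qed.

Lemma ex_series_recomb_row (i : nat) : ex_series (recomb_row i).
Proof.
  apply (@ex_series_le R_AbsRing R_CompleteNormedModule _
           (fun j => sum_f_R0 (fun k => p k * p (i + j - k)%nat) (i + j))).
  - intros j; change (norm (recomb_row i j)) with (Rabs (recomb_row i j)).
    rewrite Rabs_pos_eq by (apply cond_pos_sum; intros; apply recomb_term_nonneg).
    apply recomb_row_le_cauchy.
  - apply (ex_series_incr_n (fun n => sum_f_R0 (fun k => p k * p (n - k)%nat) n) i).
    exists (1 * 1); apply is_series_mult_pos; apply p_prob || exact p_nonneg.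
Qed.

Lemma fixed_point_ge_term (i j k l : nat) : T_q q i j k l * p k * p l <= p i.
Proof.
  destruct (Nat.eq_dec (i + j) (k + l)) as [E|E];
    [|rewrite T_q_eq0 by exact E; rewrite !Rmult_0_l; apply p_nonneg].
  rewrite <- (p_fixed i), recomb_rows.
  apply Rle_trans with (recomb_row i j).
  - replace l with (i + j - k)%nat by lia.
    apply (sum_f_R0_ge_term (fun k => T_q q i j k (i + j - k) * p k * p (i + j - k)%nat));
      [intros; apply recomb_term_nonneg | lia].
  - apply Series_ge_term; [|apply ex_series_recomb_row].
    intros; apply cond_pos_sum; intros; apply recomb_term_nonneg.
Qed.

Lemma fixed_point_pos_below_sum (i k l : nat) :
  0 < p k -> 0 < p l -> (i <= k + l)%nat -> 0 < p i.
Proof.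
  intros Hk Hl Hi.
  apply Rlt_le_trans with (T_q q i (k + l - i) k l * p k * p l);
    [|apply fixed_point_ge_term].
  apply Rmult_lt_0_compat; [apply Rmult_lt_0_compat|]; auto.
  apply T_q_pos; [exact q_gt0 | lia].
Qed.

Lemma fixed_point_pos : p <> dirac0 -> forall k, 0 < p k.
Proof.
  intros Hne k.
  destruct (prob_measure_ne_dirac0 p p_prob Hne) as [m [Hm Hpm]].
  assert (Hup : forall n, 0 < p (m + n)%nat).
  { induction n as [|n IH]; [rewrite Nat.add_0_r; exact Hpm|].
    apply (fixed_point_pos_below_sum _ (m + n) m); auto; lia. }
  apply (fixed_point_pos_below_sum _ (m + k) (m + k)); auto; lia.
Qed.

End FixedPoint.

Lemma reversible_balance (q : R) (p : nat -> R) (i j k l : nat) :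
  0 < q -> reversible q p ->
  T_un q i j k l * T_mass q i j * p k * p l = T_un q k l i j * T_mass q k l * p i * p j.
Proof.
  intros Hq Hrev.
  pose proof (T_mass_pos q Hq i j); pose proof (T_mass_pos q Hq k l).
  pose proof (Hrev i j k l) as E; unfold T_q in E; rewrite !C_q_inv_mass in E.
  apply (Rmult_eq_compat_l (T_mass q i j * T_mass q k l)) in E.
  field_simplify in E; [|lra|lra].
  lra.
Qed.

Lemma balance_cycle_absurd (q a0 a1 a2 a3 : R) :
  0 < q < 1 -> 0 < a0 -> 0 < a1 -> 0 < a2 -> 0 < a3 ->
  3 * q * a1 * a1 = (2 + 2 * q) * a0 * a2 ->
  4 * q * a1 * a2 = (4 + 2 * q) * a0 * a3 ->
  (6 + 2 * q) * q * a2 * a2 = (3 + 4 * q + 2 * q ^ 2) * a1 * a3 ->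
  False.
Proof.
  intros Hq H0 H1 H2 H3 E1 E2 E3.
  assert (E : (4 + 2 * q) * (6 + 2 * q) * a0 * a2 = 4 * (3 + 4 * q + 2 * q ^ 2) * a1 * a1).
  { apply (Rmult_eq_reg_l (q * a2)); [|nra].
    transitivity ((4 + 2 * q) * a0 * ((6 + 2 * q) * q * a2 * a2)); [ring|].
    rewrite E3.
    transitivity ((3 + 4 * q + 2 * q ^ 2) * a1 * ((4 + 2 * q) * a0 * a3)); [ring|].
    rewrite <- E2; ring. }
  assert (0 < a1 * a1 * ((1 - q) * (6 + 2 * q - q * q))).
  { apply Rmult_lt_0_compat; [nra|]; apply Rmult_lt_0_compat; nra. }
  nra.
Qed.

Lemma not_reversible_pos (q : R) (p : nat -> R) :
  0 < q < 1 -> (forall k, 0 < p k) -> ~ reversible q p.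
Proof.
  intros Hq Hpos Hrev.
  pose proof (reversible_balance q p 0 2 1 1 ltac:(lra) Hrev) as E1.
  pose proof (reversible_balance q p 0 3 1 2 ltac:(lra) Hrev) as E2.
  pose proof (reversible_balance q p 1 3 2 2 ltac:(lra) Hrev) as E3.
  unfold T_mass, T_un in E1, E2, E3; simpl in E1, E2, E3.
  apply (balance_cycle_absurd q (p 0%nat) (p 1%nat) (p 2%nat) (p 3%nat)); auto; nra.
Qed.

Theorem proposition15 (q : R) (hq : 0 < q < 1) (p : nat -> R) :
  prob_measure p ->
  (forall i, recomb q p i = p i) ->
  p <> dirac0 ->
  (forall k, 0 < p k) /\ ~ reversible q p.
Proof.
  intros Hprob Hfix Hne.
  pose proof (fixed_point_pos q p ltac:(lra) Hprob Hfix Hne) as Hpos.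
  split; [exact Hpos | exact (not_reversible_pos q p hq Hpos)].
Qed.
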